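(* $\sqrt[3]{2}\notin\mathbb F_0$. Equivalently, given the points $(0,0)$ and $(0,1)$, one cannot construct by origami two points at distance $\sqrt[3]{2}$, so a cube with twice the volume of the unit cube cannot be constructed by origami.
   Context: An origami pair is a pair $(\mathcal P,\mathcal L)$ where $\mathcal P\subset\mathbb R^2$ is a set of points and $\mathcal L$ is a collection of lines in $\mathbb R^2$ such that: (i) the intersection point of any two non-parallel lines of $\mathcal L$ lies in $\mathcal P$; (ii) for any two distinct points of $\mathcal P$, the line through them is in $\mathcal L$; (iii) for any two distinct points of $\mathcal P$, the perpendicular bisector of the segment joining them is in $\mathcal L$; (iv) if $L_1,L_2\in\mathcal L$, then every line equidistant from $L_1$ and $L_2$ is in $\mathcal L$ (the midline if they are parallel, the angle bisectors if they intersect); (v) if $L_1,L_2\in\mathcal L$, then the mirror reflection of $L_2$ across $L_1$ is in $\mathcal L$. A set $\mathcal P\subset\mathbb R^2$ is closed under origami constructions if there is a collection of lines $\mathcal L$ with $(\mathcal P,\mathcal L)$ an origami pair. The set of origami constructible points is $\mathcal P_0=\bigcap\{\mathcal P : (0,0),(0,1)\in\mathcal P \text{ and } \mathcal P \text{ is closed under origami constructions}\}$. The set of origami numbers is $\mathbb F_0=\{\alpha\in\mathbb R : \exists v_1,v_2\in\mathcal P_0,\ |\alpha|=\operatorname{dist}(v_1,v_2)\}$. *)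

From Stdlib Require Import Reals.
Open Scope R_scope.

Definition point : Type := (R * R)%type.

Definition pset := point -> Prop.

Definition dist (p q : point) : R :=
  sqrt ((fst p - fst q) ^ 2 + (snd p - snd q) ^ 2).

Definition IsLine (ell : pset) : Prop :=
  exists a b c : R, (a <> 0 \/ b <> 0) /\
    forall x : point, ell x <-> a * fst x + b * snd x = c.

Definition in_coll (L : pset -> Prop) (S : pset) : Prop :=
  exists ell, L ell /\ forall x, ell x <-> S x.

(* the line through p and q (a line when p <> q) *)
Definition line_through (p q : point) : pset := fun x =>
  (fst q - fst p) * (snd x - snd p) - (snd q - snd p) * (fst x - fst p) = 0.

Definition perp_bisector (p q : point) : pset := fun x => dist x p = dist x q.

Definition pt_set_dist (x : point) (ell : pset) (d : R) : Prop :=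
  (exists y, ell y /\ dist x y = d) /\ (forall y, ell y -> d <= dist x y).

Definition equidistant (ell L1 L2 : pset) : Prop :=
  forall x, ell x -> exists d, pt_set_dist x L1 d /\ pt_set_dist x L2 d.

(* z is the mirror image of y across the line L (z = 2 f - y, f the foot of
   the perpendicular from y to L, i.e. the closest point of L to y) *)
Definition reflect_pt (L : pset) (y z : point) : Prop :=
  exists f, L f /\ (forall w, L w -> dist y f <= dist y w) /\
    z = (2 * fst f - fst y, 2 * snd f - snd y).

Definition reflect_line (L1 L2 : pset) : pset := fun z =>
  exists y, L2 y /\ reflect_pt L1 y z.

Definition origami_pair (P : pset) (L : pset -> Prop) : Prop :=
  (forall ell, L ell -> IsLine ell) /\
  (* (i) intersection point of two non-parallel lines lies in P;
     two lines of L sharing a point are non-parallel iff they are distinct *)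
  (forall L1 L2 x, L L1 -> L L2 -> (exists y, L1 y /\ ~ L2 y) ->
      L1 x -> L2 x -> P x) /\
  (forall p q, P p -> P q -> p <> q -> in_coll L (line_through p q)) /\
  (forall p q, P p -> P q -> p <> q -> in_coll L (perp_bisector p q)) /\
  (forall L1 L2 ell, L L1 -> L L2 -> (exists y, L1 y /\ ~ L2 y) ->
      IsLine ell -> equidistant ell L1 L2 -> in_coll L ell) /\
  (forall L1 L2, L L1 -> L L2 -> in_coll L (reflect_line L1 L2)).

Definition closed_under_origami (P : pset) : Prop :=
  exists L, origami_pair P L.

Definition P0 : pset := fun v =>
  forall P : pset, P (0, 0) -> P (0, 1) -> closed_under_origami P -> P v.

Definition origami_number (a : R) : Prop :=
  exists v1 v2, P0 v1 /\ P0 v2 /\ Rabs a = dist v1 v2.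

From Pilot Require Import Defs.
From Stdlib Require Import Reals Lra Lia ZArith List.
Open Scope R_scope.
(* Reals also exports a [dist]; this restores the Euclidean one of Defs. *)
Import Pilot.Defs.

(* Let K ([constructible] below) be the field of real numbers reachable from the rationals by
   field operations and square roots of nonnegative numbers.  Points with coordinates in K,
   together with the lines with coefficients in K, form an origami pair: intersections, lines
   through two points, perpendicular bisectors and reflections are given by rational expressions
   in the data, and the angle bisectors of a x + b y = c only need the extra square roots
   sqrt (a^2 + b^2).  Hence every origami number lies in K.  On the other hand, if a cube root of
   a rational c lies in F(sqrt r) but not in F, its conjugate is a second real cube root of c;
   so descending a tower of quadratic extensions, a cube root of 2 in K would be rational. *)

Lemma sq_eq0 (u : R) : u ^ 2 = 0 -> u = 0.
Proof. intros H. nra. Qed.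

Lemma cube_inj (x y : R) : x ^ 3 = y ^ 3 -> x = y.
Proof.
  intros H.
  assert (E : (x - y) ^ 2 * ((2 * x + y) ^ 2 + 3 * y ^ 2) = 0).
  { replace ((x - y) ^ 2 * ((2 * x + y) ^ 2 + 3 * y ^ 2))
      with (4 * (x - y) * (x ^ 3 - y ^ 3)) by ring.
    rewrite H; ring. }
  pose proof (pow2_ge_0 (2 * x + y)); pose proof (pow2_ge_0 y).
  apply Rmult_integral in E as [E | E].
  - apply sq_eq0 in E; lra.
  - assert (y = 0) by (apply sq_eq0; lra).
    assert (2 * x + y = 0) by (apply sq_eq0; lra).
    lra.
Qed.

Record subfield (F : R -> Prop) : Prop := {
  subfield0 : F 0;
  subfield1 : F 1;
  subfieldD : forall x y, F x -> F y -> F (x + y);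
  subfieldN : forall x, F x -> F (- x);
  subfieldM : forall x y, F x -> F y -> F (x * y);
  subfieldV : forall x, F x -> F (/ x) }.

Section Subfield.
Variables (F : R -> Prop) (HF : subfield F).

Lemma subfieldB (x y : R) : F x -> F y -> F (x - y).
Proof. intros; apply (subfieldD _ HF); [| apply (subfieldN _ HF)]; auto. Qed.

Lemma subfield_div (x y : R) : F x -> F y -> F (x / y).
Proof. intros; apply (subfieldM _ HF); [| apply (subfieldV _ HF)]; auto. Qed.

Lemma subfield_pow (x : R) (n : nat) : F x -> F (x ^ n).
Proof.
  intros Hx; induction n; simpl; [apply (subfield1 _ HF) | apply (subfieldM _ HF); auto].
Qed.

Lemma subfield_INR (n : nat) : F (INR n).
Proof.
  induction n; [apply (subfield0 _ HF) |].
  rewrite S_INR; apply (subfieldD _ HF); [| apply (subfield1 _ HF)]; auto.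
Qed.

Lemma subfield_IZR (z : Z) : F (IZR z).
Proof.
  destruct z as [| p | p]; [apply (subfield0 _ HF) | | rewrite IZR_NEG; apply (subfieldN _ HF)];
    unfold IZR; rewrite <- INR_IPR; apply subfield_INR.
Qed.

End Subfield.

Ltac subfield_tac HF :=
  repeat first [ assumption | apply (subfield_IZR _ HF) | apply (subfield_pow _ HF)
               | apply (subfieldB _ HF) | apply (subfield_div _ HF) | apply (subfieldD _ HF)
               | apply (subfieldM _ HF) | apply (subfieldN _ HF) | apply (subfieldV _ HF) ].

Definition rational (x : R) : Prop := exists p q : Z, q <> 0%Z /\ x = IZR p / IZR q.

Lemma rational_subfield : subfield rational.
Proof.
  assert (Hnz : forall q : Z, q <> 0%Z -> IZR q <> 0) by (intros; apply not_0_IZR; auto).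
  constructor.
  - exists 0%Z, 1%Z; split; [lia | simpl; field].
  - exists 1%Z, 1%Z; split; [lia | simpl; field].
  - intros x y [p [q [Hq ->]]] [p' [q' [Hq' ->]]].
    exists (p * q' + p' * q)%Z, (q * q')%Z; split; [lia |].
    rewrite plus_IZR, !mult_IZR; field; auto.
  - intros x [p [q [Hq ->]]].
    exists (- p)%Z, q; split; [auto | rewrite opp_IZR; field; auto].
  - intros x y [p [q [Hq ->]]] [p' [q' [Hq' ->]]].
    exists (p * p')%Z, (q * q')%Z; split; [lia | rewrite !mult_IZR; field; auto].
  - intros x [p [q [Hq ->]]].
    destruct (Z.eq_dec p 0) as [-> | Hp].
    + exists 0%Z, 1%Z; split; [lia |].
      unfold Rdiv; rewrite Rmult_0_l, Rinv_0; simpl; field.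
    + exists q, p; split; [auto | field; auto].
Qed.

Lemma Z_no_cube_root_2 (a b : Z) : b <> 0%Z -> (a * a * a <> 2 * (b * b * b))%Z.
Proof.
  assert (Hdesc : forall n a b, (Z.abs b <= Z.of_nat n)%Z -> b <> 0%Z ->
                  (a * a * a <> 2 * (b * b * b))%Z).
  { induction n; intros a' b' Hb Hb0 H; [lia |].
    (* infinite descent: a' is even, then so is b', and (a'/2, b'/2) is a smaller solution *)
    assert (Ea : Z.even a' = true).
    { assert (Z.even (a' * a' * a') = true) by (rewrite H, Z.even_mul; reflexivity).
      rewrite !Z.even_mul in H0; destruct (Z.even a'); auto. }
    apply Z.even_spec in Ea as [a'' ->].
    assert (Eb : Z.even b' = true).
    { assert (Z.even (b' * b' * b') = true).
      { replace (b' * b' * b')%Z with (2 * (2 * (a'' * a'' * a'')))%Z by lia.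
        rewrite Z.even_mul; reflexivity. }
      rewrite !Z.even_mul in H0; destruct (Z.even b'); auto. }
    apply Z.even_spec in Eb as [b'' ->].
    apply (IHn a'' b''); lia. }
  intros; apply (Hdesc (Z.abs_nat b)); auto; lia.
Qed.

Lemma rational_cube_ne_2 (x : R) : rational x -> x ^ 3 <> 2.
Proof.
  intros [p [q [Hq ->]]] Hc.
  assert (Hq' : IZR q <> 0) by (apply not_0_IZR; auto).
  apply (Z_no_cube_root_2 p q Hq), eq_IZR.
  rewrite !mult_IZR.
  replace (IZR p) with (IZR p / IZR q * IZR q) by (field; auto).
  replace (IZR p / IZR q * IZR q * (IZR p / IZR q * IZR q) * (IZR p / IZR q * IZR q))
    with ((IZR p / IZR q) ^ 3 * (IZR q * IZR q * IZR q)) by ring.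
  rewrite Hc; reflexivity.
Qed.

Definition adjoin_sqrt (F : R -> Prop) (r x : R) : Prop :=
  exists p q, F p /\ F q /\ x = p + q * sqrt r.

Section AdjoinSqrt.
Variables (F : R -> Prop) (HF : subfield F) (r : R) (Fr : F r) (r_ge0 : 0 <= r).

Let s := sqrt r.
Let ss : s * s = r := sqrt_sqrt r r_ge0.

Lemma adjoin_sqrt_base (x : R) : F x -> adjoin_sqrt F r x.
Proof. intros; exists x, 0; repeat split; [auto | apply (subfield0 _ HF) | ring]. Qed.

Lemma adjoin_sqrt_inv (x : R) : adjoin_sqrt F r x -> adjoin_sqrt F r (/ x).
Proof.
  intros [p [q [Fp [Fq ->]]]]; fold s.
  assert (Hnorm : p * p - q * q * r = (p + q * s) * (p - q * s)) by (rewrite <- ss; ring).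
  destruct (Req_dec (p * p - q * q * r) 0) as [H0 | Hn].
  - (* either p + q s = 0, or p = q s and p + q s = 2 p lies in F *)
    rewrite H0 in Hnorm; symmetry in Hnorm; apply Rmult_integral in Hnorm as [E | E].
    + rewrite E, Rinv_0; apply adjoin_sqrt_base, (subfield0 _ HF).
    + replace (p + q * s) with (p + p) by lra.
      apply adjoin_sqrt_base; subfield_tac HF.
  - exists (p / (p * p - q * q * r)), (- q / (p * p - q * q * r)).
    split; [subfield_tac HF | split; [subfield_tac HF |]].
    rewrite Hnorm in Hn |- *; apply Rmult_neq_0_reg in Hn as [Hp Hm].
    fold s; field; auto.
Qed.

Lemma adjoin_sqrt_subfield : subfield (adjoin_sqrt F r).
Proof.
  constructor.
  - apply adjoin_sqrt_base, (subfield0 _ HF).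
  - apply adjoin_sqrt_base, (subfield1 _ HF).
  - intros x y [p [q [Fp [Fq ->]]]] [p' [q' [Fp' [Fq' ->]]]].
    exists (p + p'), (q + q'); repeat split; [subfield_tac HF | subfield_tac HF | ring].
  - intros x [p [q [Fp [Fq ->]]]].
    exists (- p), (- q); repeat split; [subfield_tac HF | subfield_tac HF | ring].
  - intros x y [p [q [Fp [Fq ->]]]] [p' [q' [Fp' [Fq' ->]]]].
    exists (p * p' + q * q' * r), (p * q' + q * p').
    repeat split; [subfield_tac HF | subfield_tac HF |].
    fold s; rewrite <- ss; ring.
  - exact adjoin_sqrt_inv.
Qed.

Lemma adjoin_sqrt_cube_root (c x : R) :
  F c -> adjoin_sqrt F r x -> x ^ 3 = c -> exists y, F y /\ y ^ 3 = c.
Proof.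
  intros Fc [p [q [Fp [Fq ->]]]] Hc; fold s in Hc |- *.
  set (A := p ^ 3 + 3 * p * q ^ 2 * r); set (B := 3 * p ^ 2 * q + q ^ 3 * r).
  assert (Ecube : (p + q * s) ^ 3 = A + B * s) by (unfold A, B; rewrite <- ss; ring).
  destruct (Req_dec B 0) as [HB | HB].
  - (* the conjugate p - q s is then another real cube root of c, so q s = 0 *)
    assert (Econj : (p - q * s) ^ 3 = A - B * s) by (unfold A, B; rewrite <- ss; ring).
    assert (p - q * s = p + q * s) by (apply cube_inj; rewrite Econj, Ecube, HB; ring).
    exists p; split; [auto | replace p with (p + q * s) by lra; auto].
  - assert (Fs : F s).
    { replace s with ((c - A) / B) by (rewrite <- Hc, Ecube; field; auto).
      unfold A, B; subfield_tac HF. }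
    exists (p + q * s); split; [subfield_tac HF | auto].
Qed.

End AdjoinSqrt.

Fixpoint tower_elt (l : list R) : R -> Prop :=
  match l with
  | nil => rational
  | r :: l' => adjoin_sqrt (tower_elt l') r
  end.

Fixpoint tower (l : list R) : Prop :=
  match l with
  | nil => True
  | r :: l' => tower l' /\ tower_elt l' r /\ 0 <= r
  end.

Lemma tower_subfield (l : list R) : tower l -> subfield (tower_elt l).
Proof.
  induction l as [| r l IH]; intros Hl; [exact rational_subfield |].
  destruct Hl as [Hl [Hr Hr0]]; apply adjoin_sqrt_subfield; auto.
Qed.

Lemma tower_elt_rational (l : list R) (x : R) : tower l -> rational x -> tower_elt l x.
Proof.
  induction l as [| r l IH]; intros Hl Hx; [auto |].
  destruct Hl as [Hl _]; simpl; apply adjoin_sqrt_base; [apply tower_subfield |]; auto.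
Qed.

Lemma tower_app (l1 l2 : list R) : tower l1 -> tower l2 ->
  tower (l2 ++ l1) /\ (forall x, tower_elt l1 x -> tower_elt (l2 ++ l1) x)
                   /\ (forall x, tower_elt l2 x -> tower_elt (l2 ++ l1) x).
Proof.
  intros Hl1; induction l2 as [| r l2 IH]; intros Hl2.
  - repeat split; auto; intros; apply tower_elt_rational; auto.
  - destruct Hl2 as [Hl2 [Hr Hr0]]; destruct (IH Hl2) as [Hl [H1 H2]].
    split; [simpl; auto | split].
    + intros x Hx; simpl; apply adjoin_sqrt_base; [apply tower_subfield |]; auto.
    + intros x [p [q [Hp [Hq ->]]]]; exists p, q; auto.
Qed.

Lemma tower_cube_root_rational (l : list R) (x c : R) :
  tower l -> tower_elt l x -> rational c -> x ^ 3 = c -> exists y, rational y /\ y ^ 3 = c.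
Proof.
  revert x; induction l as [| r l IH]; intros x Hl Hx Hc Hxc; [eauto |].
  destruct Hl as [Hl [Hr Hr0]].
  destruct (adjoin_sqrt_cube_root (tower_elt l) (tower_subfield l Hl) r Hr Hr0 c x)
    as [y [Hy Hyc]]; auto using tower_elt_rational.
  apply (IH y); auto.
Qed.

Definition constructible (x : R) : Prop := exists l, tower l /\ tower_elt l x.

Lemma constructible_subfield : subfield constructible.
Proof.
  assert (Hbin : forall op : R -> R -> R,
    (forall F, subfield F -> forall x y, F x -> F y -> F (op x y)) ->
    forall x y, constructible x -> constructible y -> constructible (op x y)).
  { intros op Hop x y [l1 [Hl1 Hx]] [l2 [Hl2 Hy]].
    destruct (tower_app l1 l2 Hl1 Hl2) as [Hl [H1 H2]].
    exists (l2 ++ l1); split; auto; apply Hop; auto; apply tower_subfield; auto. }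
  assert (Hun : forall op : R -> R,
    (forall F, subfield F -> forall x, F x -> F (op x)) ->
    forall x, constructible x -> constructible (op x)).
  { intros op Hop x [l [Hl Hx]]; exists l; split; auto.
    apply Hop; auto; apply tower_subfield; auto. }
  constructor.
  - exists nil; split; [exact I | apply (subfield0 _ rational_subfield)].
  - exists nil; split; [exact I | apply (subfield1 _ rational_subfield)].
  - apply Hbin; intros F HF; apply (subfieldD _ HF).
  - apply Hun; intros F HF; apply (subfieldN _ HF).
  - apply Hbin; intros F HF; apply (subfieldM _ HF).
  - apply Hun; intros F HF; apply (subfieldV _ HF).
Qed.

Lemma constructible_sqrt (x : R) : constructible x -> 0 <= x -> constructible (sqrt x).
Proof.
  intros [l [Hl Hx]] Hx0; exists (x :: l); split; [simpl; auto |].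
  exists 0, 1; repeat split; [apply (subfield0 _ (tower_subfield l Hl))
                             | apply (subfield1 _ (tower_subfield l Hl)) | ring].
Qed.

Lemma constructible_cube_ne_2 (x : R) : constructible x -> x ^ 3 <> 2.
Proof.
  intros [l [Hl Hx]] Hx2.
  destruct (tower_cube_root_rational l x 2 Hl Hx) as [y [Hy Hy2]]; auto.
  - apply (subfield_IZR _ rational_subfield 2).
  - apply (rational_cube_ne_2 y); auto.
Qed.

Ltac constructible_tac := subfield_tac constructible_subfield.

Definition sq_dist (p q : point) : R := (fst p - fst q) ^ 2 + (snd p - snd q) ^ 2.

Lemma sq_dist_ge0 (p q : point) : 0 <= sq_dist p q.
Proof.
  unfold sq_dist; pose proof (pow2_ge_0 (fst p - fst q)); pose proof (pow2_ge_0 (snd p - snd q)).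
  lra.
Qed.

Lemma sq_dist_le0 (p q : point) : sq_dist p q <= 0 -> p = q.
Proof.
  destruct p as [p1 p2], q as [q1 q2]; unfold sq_dist; simpl; intros H.
  pose proof (pow2_ge_0 (p1 - q1)); pose proof (pow2_ge_0 (p2 - q2)).
  assert (p1 - q1 = 0) by (apply sq_eq0; lra).
  assert (p2 - q2 = 0) by (apply sq_eq0; lra).
  f_equal; lra.
Qed.

Lemma dist_le_iff (p q w : point) : dist p q <= dist p w <-> sq_dist p q <= sq_dist p w.
Proof.
  unfold dist; fold (sq_dist p q) (sq_dist p w); split; intros H.
  - apply sqrt_le_0; auto using sq_dist_ge0.
  - apply sqrt_le_1_alt; auto.
Qed.

Lemma point_neq (p q : point) : p <> q -> fst p - fst q <> 0 \/ snd p - snd q <> 0.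
Proof.
  destruct p as [p1 p2], q as [q1 q2]; simpl; intros H.
  destruct (Req_dec p1 q1), (Req_dec p2 q2); subst; [tauto | right | left | left]; lra.
Qed.

Lemma norm2_pos (a b : R) : a <> 0 \/ b <> 0 -> 0 < a * a + b * b.
Proof. intros [H | H]; nra. Qed.

Definition foot (a b c : R) (y : point) : point :=
  let t := (a * fst y + b * snd y - c) / (a * a + b * b) in (fst y - t * a, snd y - t * b).

Definition mirror (a b c : R) (y : point) : point :=
  (2 * fst (foot a b c y) - fst y, 2 * snd (foot a b c y) - snd y).

Section Line.
Variables (a b c : R) (ell : pset).
Hypothesis Hab : a <> 0 \/ b <> 0.
Hypothesis Hell : forall x, ell x <-> a * fst x + b * snd x = c.

Let N_pos := norm2_pos a b Hab.

Lemma foot_on_line (y : point) : ell (foot a b c y).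
Proof. apply Hell; destruct y; unfold foot; simpl; field; lra. Qed.

Lemma sq_dist_foot (y : point) :
  sq_dist y (foot a b c y) = (a * fst y + b * snd y - c) ^ 2 / (a * a + b * b).
Proof. destruct y; unfold sq_dist, foot; simpl; field; lra. Qed.

Lemma pythagoras_foot (y w : point) :
  ell w -> sq_dist y w = sq_dist y (foot a b c y) + sq_dist (foot a b c y) w.
Proof.
  destruct y, w; intros Hw; apply Hell in Hw; simpl in Hw.
  unfold sq_dist, foot; simpl; subst c; field; lra.
Qed.

Lemma foot_dist_le (y w : point) : ell w -> dist y (foot a b c y) <= dist y w.
Proof.
  intros Hw; apply dist_le_iff; rewrite (pythagoras_foot y w Hw).
  pose proof (sq_dist_ge0 (foot a b c y) w); lra.
Qed.

Lemma closest_point_iff (y f : point) :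
  ell f -> (forall w, ell w -> dist y f <= dist y w) <-> f = foot a b c y.
Proof.
  intros Hf; split.
  - intros Hmin; specialize (Hmin _ (foot_on_line y)); apply dist_le_iff in Hmin.
    rewrite (pythagoras_foot y f Hf) in Hmin.
    symmetry; apply sq_dist_le0; lra.
  - intros ->; apply foot_dist_le.
Qed.

Lemma pt_set_dist_sq (x : point) (d : R) :
  pt_set_dist x ell d -> d * d = (a * fst x + b * snd x - c) ^ 2 / (a * a + b * b).
Proof.
  intros [[y [Hy <-]] Hmin].
  pose proof (Hmin _ (foot_on_line x)); pose proof (foot_dist_le x y Hy).
  replace (dist x y) with (dist x (foot a b c x)) by lra.
  rewrite <- sq_dist_foot; apply sqrt_sqrt, sq_dist_ge0.
Qed.

Lemma reflect_pt_iff (y z : point) : reflect_pt ell y z <-> z = mirror a b c y.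
Proof.
  split.
  - intros [f [Hf [Hmin ->]]]; apply (closest_point_iff y f Hf) in Hmin; subst f; reflexivity.
  - intros ->; exists (foot a b c y); split; [apply foot_on_line |].
    split; [apply foot_dist_le | reflexivity].
Qed.

Lemma mirror_invol (y : point) : mirror a b c (mirror a b c y) = y.
Proof. destruct y; unfold mirror, foot; simpl; f_equal; field; lra. Qed.

End Line.

Lemma orth_of_proportional (a1 b1 a2 b2 u1 u2 : R) :
  a1 * b2 = a2 * b1 -> a1 <> 0 \/ b1 <> 0 -> a1 * u1 + b1 * u2 = 0 -> a2 * u1 + b2 * u2 = 0.
Proof.
  intros Hd [Hn | Hn] Hu.
  - apply (Rmult_eq_reg_l a1); auto.
    replace (a1 * (a2 * u1 + b2 * u2)) with (a2 * (a1 * u1 + b1 * u2) + u2 * (a1 * b2 - a2 * b1))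
      by ring.
    rewrite Hu, Hd; ring.
  - apply (Rmult_eq_reg_l b1); auto.
    replace (b1 * (a2 * u1 + b2 * u2)) with (b2 * (a1 * u1 + b1 * u2) + u1 * (a2 * b1 - a1 * b2))
      by ring.
    rewrite Hu, Hd; ring.
Qed.

Lemma lines_eq_of_two_points (a b c A B C : R) (p q : point) :
  a <> 0 \/ b <> 0 -> A <> 0 \/ B <> 0 -> p <> q ->
  a * fst p + b * snd p = c -> a * fst q + b * snd q = c ->
  A * fst p + B * snd p = C -> A * fst q + B * snd q = C ->
  forall z : point, a * fst z + b * snd z = c <-> A * fst z + B * snd z = C.
Proof.
  intros Hab HAB Hpq H1 H2 H3 H4 z.
  set (u1 := fst q - fst p); set (u2 := snd q - snd p).
  assert (e1 : a * u1 + b * u2 = 0) by (unfold u1, u2; lra).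
  assert (e2 : A * u1 + B * u2 = 0) by (unfold u1, u2; lra).
  assert (Hdet : a * B = A * b).
  { destruct (point_neq q p) as [Hu | Hu]; auto; fold u1 u2 in Hu.
    - apply (Rmult_eq_reg_r u1); auto.
      replace (a * B * u1)
        with (B * (a * u1 + b * u2) + A * b * u1 - b * (A * u1 + B * u2)) by ring.
      rewrite e1, e2; ring.
    - apply (Rmult_eq_reg_r u2); auto.
      replace (a * B * u2)
        with (a * (A * u1 + B * u2) + A * b * u2 - A * (a * u1 + b * u2)) by ring.
      rewrite e1, e2; ring. }
  split; intros Hz.
  - assert (A * (fst z - fst p) + B * (snd z - snd p) = 0)
      by (apply (orth_of_proportional a b); auto; lra).
    lra.
  - assert (a * (fst z - fst p) + b * (snd z - snd p) = 0)
      by (apply (orth_of_proportional A B); auto; lra).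
    lra.
Qed.

Definition constructible_point (v : point) : Prop := constructible (fst v) /\ constructible (snd v).

Definition constructible_line (ell : pset) : Prop :=
  exists a b c, constructible a /\ constructible b /\ constructible c /\ (a <> 0 \/ b <> 0) /\
    forall x, ell x <-> a * fst x + b * snd x = c.

Lemma constructible_line_IsLine (ell : pset) : constructible_line ell -> IsLine ell.
Proof. intros [a [b [c [_ [_ [_ [Hab Hell]]]]]]]; exists a, b, c; auto. Qed.

Lemma constructible_line_intro (a b c : R) :
  constructible a -> constructible b -> constructible c -> a <> 0 \/ b <> 0 ->
  constructible_line (fun z => a * fst z + b * snd z = c).
Proof. intros; exists a, b, c; repeat split; auto. Qed.

Lemma constructible_line_of_two_points (a b c A B C : R) (ell : pset) (p q : point) :
  a <> 0 \/ b <> 0 -> (forall x, ell x <-> a * fst x + b * snd x = c) ->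
  constructible A -> constructible B -> constructible C -> A <> 0 \/ B <> 0 ->
  p <> q -> ell p -> ell q -> A * fst p + B * snd p = C -> A * fst q + B * snd q = C ->
  in_coll constructible_line ell.
Proof.
  intros Hab Hell KA KB KC HAB Hpq Hp Hq HAp HAq.
  exists (fun z => A * fst z + B * snd z = C); split.
  - apply constructible_line_intro; auto.
  - intros z; rewrite Hell; rewrite Hell in Hp, Hq.
    symmetry; apply (lines_eq_of_two_points a b c A B C p q); auto.
Qed.

Lemma intersection_constructible (L1 L2 : pset) (x : point) :
  constructible_line L1 -> constructible_line L2 -> (exists y, L1 y /\ ~ L2 y) ->
  L1 x -> L2 x -> constructible_point x.
Proof.
  intros [a1 [b1 [c1 [Ka1 [Kb1 [Kc1 [Hn1 H1]]]]]]] [a2 [b2 [c2 [Ka2 [Kb2 [Kc2 [Hn2 H2]]]]]]]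
    [y [Hy1 Hy2]] Hx1 Hx2.
  apply H1 in Hx1, Hy1; apply H2 in Hx2; rewrite H2 in Hy2.
  destruct (Req_dec (a1 * b2 - a2 * b1) 0) as [Hd | Hd].
  - (* parallel lines through a common point coincide *)
    exfalso; apply Hy2.
    assert (a2 * (fst y - fst x) + b2 * (snd y - snd x) = 0)
      by (apply (orth_of_proportional a1 b1); auto; lra).
    lra.
  - destruct x as [x1 x2]; simpl in *; split; simpl.
    + replace x1 with ((c1 * b2 - c2 * b1) / (a1 * b2 - a2 * b1))
        by (rewrite <- Hx1, <- Hx2; field; auto).
      constructible_tac.
    + replace x2 with ((a1 * c2 - a2 * c1) / (a1 * b2 - a2 * b1))
        by (rewrite <- Hx1, <- Hx2; field; auto).
      constructible_tac.
Qed.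

Lemma line_through_constructible (p q : point) :
  constructible_point p -> constructible_point q -> p <> q ->
  in_coll constructible_line (line_through p q).
Proof.
  destruct p as [p1 p2], q as [q1 q2]; intros [Kp1 Kp2] [Kq1 Kq2] Hpq; simpl in *.
  exists (fun x => (p2 - q2) * fst x + (q1 - p1) * snd x = (q1 - p1) * p2 - (q2 - p2) * p1).
  split.
  - apply constructible_line_intro; try constructible_tac.
    destruct (point_neq _ _ Hpq) as [H | H]; simpl in H; [right | left]; lra.
  - intros [x1 x2]; unfold line_through; simpl; lra.
Qed.

Lemma perp_bisector_constructible (p q : point) :
  constructible_point p -> constructible_point q -> p <> q ->
  in_coll constructible_line (perp_bisector p q).
Proof.
  destruct p as [p1 p2], q as [q1 q2]; intros [Kp1 Kp2] [Kq1 Kq2] Hpq; simpl in *.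
  exists (fun x => 2 * (q1 - p1) * fst x + 2 * (q2 - p2) * snd x
                   = (q1 * q1 + q2 * q2) - (p1 * p1 + p2 * p2)).
  split.
  - apply constructible_line_intro; try constructible_tac.
    destruct (point_neq _ _ Hpq) as [H | H]; simpl in H; [left | right]; lra.
  - intros x; unfold perp_bisector, dist.
    fold (sq_dist x (p1, p2)) (sq_dist x (q1, q2)).
    assert (Hid : sq_dist x (p1, p2) - sq_dist x (q1, q2)
                  = 2 * (q1 - p1) * fst x + 2 * (q2 - p2) * snd x
                    - ((q1 * q1 + q2 * q2) - (p1 * p1 + p2 * p2)))
      by (unfold sq_dist; simpl; ring).
    split; intros E.
    + f_equal; lra.
    + apply sqrt_inj in E; auto using sq_dist_ge0; lra.
Qed.

Lemma reflect_line_constructible (L1 L2 : pset) :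
  constructible_line L1 -> constructible_line L2 -> in_coll constructible_line (reflect_line L1 L2).
Proof.
  intros [a [b [c [Ka [Kb [Kc [Hab H1]]]]]]] [a2 [b2 [c2 [Ka2 [Kb2 [Kc2 [Hab2 H2]]]]]]].
  pose proof (norm2_pos a b Hab) as HN.
  set (k := (a * a2 + b * b2) / (a * a + b * b)).
  assert (Hmirror : forall z, a2 * fst (mirror a b c z) + b2 * snd (mirror a b c z) - c2
            = (a2 - 2 * k * a) * fst z + (b2 - 2 * k * b) * snd z - (c2 - 2 * k * c)).
  { intros [z1 z2]; unfold mirror, foot, k; simpl; field; lra. }
  exists (fun z => (a2 - 2 * k * a) * fst z + (b2 - 2 * k * b) * snd z = c2 - 2 * k * c).
  split.
  - apply constructible_line_intro; try (unfold k; constructible_tac).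
    destruct (Req_dec (a2 - 2 * k * a) 0) as [E1 | E1]; [| now left].
    destruct (Req_dec (b2 - 2 * k * b) 0) as [E2 | E2]; [| now right].
    exfalso.
    assert (Hk : k * (a * a + b * b) = a * a2 + b * b2) by (unfold k; field; lra).
    assert (k = 0) by nra.
    rewrite H in E1, E2; destruct Hab2; lra.
  - intros z; split.
    + intros Hz; exists (mirror a b c z); split.
      * apply H2; pose proof (Hmirror z); lra.
      * apply (reflect_pt_iff a b c L1 Hab H1); rewrite mirror_invol; auto.
    + intros [y [Hy Hr]]; apply (reflect_pt_iff a b c L1 Hab H1) in Hr; subst z.
      apply H2 in Hy; pose proof (Hmirror (mirror a b c y)) as Hm.
      rewrite mirror_invol in Hm; auto; lra.
Qed.

Lemma line_in_union_of_two_lines (a b c A1 B1 C1 A2 B2 C2 : R) (ell : pset) :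
  a <> 0 \/ b <> 0 -> (forall x, ell x <-> a * fst x + b * snd x = c) ->
  (forall z, ell z -> (A1 * fst z + B1 * snd z - C1) * (A2 * fst z + B2 * snd z - C2) = 0) ->
  exists p q : point, p <> q /\ ell p /\ ell q /\
    (A1 * fst p + B1 * snd p = C1 /\ A1 * fst q + B1 * snd q = C1 \/
     A2 * fst p + B2 * snd p = C2 /\ A2 * fst q + B2 * snd q = C2).
Proof.
  intros Hab Hell Hprod; pose proof (norm2_pos a b Hab) as HN.
  (* q1, p0, q2 are equally spaced on ell: an affine form vanishing at two of them
     vanishes at the third *)
  set (p0 := (c * a / (a * a + b * b), c * b / (a * a + b * b))).
  set (q1 := (fst p0 - b, snd p0 + a)); set (q2 := (fst p0 + b, snd p0 - a)).
  assert (E0 : ell p0) by (apply Hell; unfold p0; simpl; field; lra).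
  assert (E1 : ell q1) by (apply Hell; unfold q1, p0; simpl; field; lra).
  assert (E2 : ell q2) by (apply Hell; unfold q2, p0; simpl; field; lra).
  assert (Aff : forall A B C, (A * fst q1 + B * snd q1 - C) + (A * fst q2 + B * snd q2 - C)
                              = 2 * (A * fst p0 + B * snd p0 - C))
    by (intros; unfold q1, q2; simpl; ring).
  exists q1, q2; split; [| repeat split; auto].
  { intros E; unfold q1, q2 in E; injection E; intros; destruct Hab; lra. }
  pose proof (Aff A1 B1 C1); pose proof (Aff A2 B2 C2).
  pose proof (Hprod p0 E0) as P0; pose proof (Hprod q1 E1) as P1; pose proof (Hprod q2 E2) as P2.
  apply Rmult_integral in P0, P1, P2.
  destruct P0, P1, P2; solve [left; split; lra | right; split; lra].
Qed.

Lemma bisector_nondegenerate (a1 b1 c1 a2 b2 c2 n1 n2 e : R) (p y : point) :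
  n1 <> 0 -> n2 <> 0 -> e <> 0 ->
  a1 * fst y + b1 * snd y = c1 -> a2 * fst y + b2 * snd y <> c2 ->
  (a1 / n1 - e * a2 / n2) * fst p + (b1 / n1 - e * b2 / n2) * snd p = c1 / n1 - e * c2 / n2 ->
  a1 / n1 - e * a2 / n2 <> 0 \/ b1 / n1 - e * b2 / n2 <> 0.
Proof.
  intros Hn1 Hn2 He Hy1 Hy2 Hp.
  destruct (Req_dec (a1 / n1 - e * a2 / n2) 0) as [EA | EA]; [| now left].
  destruct (Req_dec (b1 / n1 - e * b2 / n2) 0) as [EB | EB]; [| now right].
  exfalso; apply Hy2.
  set (v := a2 * fst y + b2 * snd y - c2).
  assert (Hy : (a1 * fst y + b1 * snd y - c1) / n1 - e * v / n2
               = (a1 / n1 - e * a2 / n2) * fst y + (b1 / n1 - e * b2 / n2) * snd y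
                 - (c1 / n1 - e * c2 / n2)) by (unfold v; field; auto).
  rewrite EA, EB, Hy1 in Hy; rewrite EA, EB in Hp.
  assert (Hv : e * v / n2 = 0) by lra.
  assert (Hv0 : v = 0)
    by (replace v with (e * v / n2 * n2 / e) by (field; auto); rewrite Hv; field; auto).
  unfold v in Hv0; lra.
Qed.

Lemma equidistant_line_constructible (L1 L2 ell : pset) :
  constructible_line L1 -> constructible_line L2 -> (exists y, L1 y /\ ~ L2 y) ->
  IsLine ell -> equidistant ell L1 L2 -> in_coll constructible_line ell.
Proof.
  intros [a1 [b1 [c1 [Ka1 [Kb1 [Kc1 [Hn1 H1]]]]]]] [a2 [b2 [c2 [Ka2 [Kb2 [Kc2 [Hn2 H2]]]]]]]
    [y [Hy1 Hy2]] [a [b [c [Hab Hell]]]] Heq.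
  apply H1 in Hy1; rewrite H2 in Hy2.
  pose proof (norm2_pos a1 b1 Hn1); pose proof (norm2_pos a2 b2 Hn2).
  set (n1 := sqrt (a1 * a1 + b1 * b1)); set (n2 := sqrt (a2 * a2 + b2 * b2)).
  assert (Hs1 : n1 * n1 = a1 * a1 + b1 * b1) by (apply sqrt_sqrt; lra).
  assert (Hs2 : n2 * n2 = a2 * a2 + b2 * b2) by (apply sqrt_sqrt; lra).
  assert (Hp1 : 0 < n1) by (apply sqrt_lt_R0; lra).
  assert (Hp2 : 0 < n2) by (apply sqrt_lt_R0; lra).
  assert (Kn1 : constructible n1) by (apply constructible_sqrt; [constructible_tac | lra]).
  assert (Kn2 : constructible n2) by (apply constructible_sqrt; [constructible_tac | lra]).
  (* the two angle bisectors of L1 and L2 *)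
  pose (A e := a1 / n1 - e * a2 / n2); pose (B e := b1 / n1 - e * b2 / n2);
    pose (C e := c1 / n1 - e * c2 / n2).
  assert (Hprod : forall z, ell z ->
    (A 1 * fst z + B 1 * snd z - C 1) * (A (-1) * fst z + B (-1) * snd z - C (-1)) = 0).
  { intros z Hz; destruct (Heq z Hz) as [d [D1 D2]].
    apply (pt_set_dist_sq a1 b1 c1 L1 Hn1 H1) in D1.
    apply (pt_set_dist_sq a2 b2 c2 L2 Hn2 H2) in D2.
    rewrite D1, <- Hs1, <- Hs2 in D2.
    replace ((A 1 * fst z + B 1 * snd z - C 1) * (A (-1) * fst z + B (-1) * snd z - C (-1)))
      with ((a1 * fst z + b1 * snd z - c1) ^ 2 / (n1 * n1)
            - (a2 * fst z + b2 * snd z - c2) ^ 2 / (n2 * n2))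
      by (unfold A, B, C; field; lra).
    lra. }
  destruct (line_in_union_of_two_lines a b c (A 1) (B 1) (C 1) (A (-1)) (B (-1)) (C (-1)) ell
              Hab Hell Hprod) as [p [q [Hpq [Hp [Hq [[G1 G2] | [G1 G2]]]]]]].
  - apply (constructible_line_of_two_points a b c (A 1) (B 1) (C 1) ell p q);
      try (unfold A, B, C; constructible_tac); auto.
    apply (bisector_nondegenerate a1 b1 c1 a2 b2 c2 n1 n2 1 p y); auto; lra.
  - apply (constructible_line_of_two_points a b c (A (-1)) (B (-1)) (C (-1)) ell p q);
      try (unfold A, B, C; constructible_tac); auto.
    apply (bisector_nondegenerate a1 b1 c1 a2 b2 c2 n1 n2 (-1) p y); auto; lra.
Qed.

Lemma constructible_closed_under_origami : closed_under_origami constructible_point.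
Proof.
  exists constructible_line.
  exact (conj constructible_line_IsLine (conj intersection_constructible
          (conj line_through_constructible (conj perp_bisector_constructible
          (conj equidistant_line_constructible reflect_line_constructible))))).
Qed.

Lemma P0_constructible (v : point) : P0 v -> constructible_point v.
Proof.
  intros Hv; apply Hv; try split; simpl; try constructible_tac.
  exact constructible_closed_under_origami.
Qed.

Lemma dist_constructible (p q : point) :
  constructible_point p -> constructible_point q -> constructible (dist p q).
Proof.
  intros [Kp1 Kp2] [Kq1 Kq2]; apply constructible_sqrt; [constructible_tac |].
  fold (sq_dist p q); apply sq_dist_ge0.
Qed.

Theorem mainTheorem8 : forall a : R, a ^ 3 = 2 -> ~ origami_number a.
Proof.
  intros a Ha [v1 [v2 [H1 [H2 Hd]]]].
  assert (Kd : constructible (Rabs a))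
    by (rewrite Hd; apply dist_constructible; apply P0_constructible; auto).
  apply (constructible_cube_ne_2 (Rabs a) Kd).
  rewrite RPow_abs, Ha; apply Rabs_right; lra.
Qed.
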